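(* Let $r>1$ and let $k,\ell,m$ be positive integers. Choose $x_0$ uniformly at random from the vertex set of the $(k,\ell,m)$-superstar and run the Moran process with fitness $r$ on it with initial mutant $x_0$. Then the extinction probability is at least $k/(2r(m+k))$.
   Context: Moran process: given a directed graph $G$ and fitness $r$, one vertex $x_0$ is a mutant, the rest non-mutants. At each step a vertex $v$ is chosen with probability proportional to fitness (mutants $r$, non-mutants $1$), an out-neighbour $w$ of $v$ is chosen uniformly at random and the state of $v$ is copied to $w$. Extinction: eventually no vertex is a mutant. The $(k,\ell,m)$-superstar has vertex set the disjoint union of reservoirs $R_1,\dots,R_\ell$ of size $m$, vertices $v_{i,j}$ ($i\in[\ell]$, $j\in[k]$), and a centre $v^*$; its edges are, for each $i\in[\ell]$: from $v^*$ to every vertex of $R_i$, from every vertex of $R_i$ to $v_{i,1}$, from $v_{i,j}$ to $v_{i,j+1}$ for $j\in[k-1]$, and from $v_{i,k}$ to $v^*$. *)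

From HB Require Import structures.
From mathcomp Require Import all_boot all_order all_algebra.
From mathcomp Require Import all_classical all_reals topology normedtype sequences.
Set Implicit Arguments. Unset Strict Implicit. Unset Printing Implicit Defensive.
Import Order.TTheory GRing.Theory Num.Theory numFieldNormedType.Exports.
Local Open Scope ring_scope.

Section Moran.
Variables (R : realType) (V : finType) (edge : rel V) (r : R).

Definition outN (v : V) : {set V} := [set w | edge v w]%SET.

Definition fitness (S : {set V}) (v : V) : R := if v \in S then r else 1.

Definition total_fitness (S : {set V}) : R := \sum_(v : V) fitness S v.

Definition reproduce (S : {set V}) (v w : V) : {set V} :=
  if v \in S then w |: S else S :\ w.

Definition moran_step (S T : {set V}) : R :=
  \sum_(v : V) \sum_(w in outN v)
     (fitness S v / total_fitness S) * (#|outN v|%:R)^-1 *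
     (reproduce S v w == T)%:R.

Fixpoint moran_nstep (n : nat) (S T : {set V}) : R :=
  match n with
  | 0 => (S == T)%:R
  | n'.+1 => \sum_(U : {set V}) moran_step S U * moran_nstep n' U T
  end.

(* extinction probability starting from the single mutant x0: the probability
   that the process eventually reaches the (absorbing) empty state, i.e. the
   limit of the probability of being extinct at time n *)
Definition extinction_prob (x0 : V) : R :=
  limn (fun n => moran_nstep n [set x0]%SET (@finset.set0 V)).

Definition uniform_extinction_prob : R :=
  (#|V|%:R)^-1 * \sum_(x0 : V) extinction_prob x0.

End Moran.

(* Vertices:
   inl (inl (i, j)) : j-th vertex of reservoir R_i   (i < l, j < m)
   inl (inr (i, j)) : v_{i, j+1}                     (i < l, j < k)
   inr tt           : the centre v^*                                   *)
Definition superstar_vertex (k l m : nat) : finType :=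
  (('I_l * 'I_m) + ('I_l * 'I_k) + unit)%type.

Definition superstar_edge (k l m : nat) : rel (superstar_vertex k l m) :=
  fun x y =>
    match x, y with
    | inr _, inl (inl _) => true
    | inl (inl (i, _)), inl (inr (i', j)) => (i == i') && (val j == 0)%N
    | inl (inr (i, j)), inl (inr (i', j')) =>
        (i == i') && (val j' == (val j).+1)%N
    | inl (inr (_, j)), inr _ => (val j == k.-1)%N
    | _, _ => false
    end.

From HB Require Import structures.
From mathcomp Require Import all_boot all_order all_algebra.
From mathcomp Require Import all_classical all_reals topology normedtype sequences.
From mathcomp Require Import lra zify.
Import Order.TTheory GRing.Theory Num.Theory numFieldNormedType.Exports.
Local Open Scope ring_scope.

(* Suppose the initial mutant x is the only out-neighbour of another vertex y.
   Measured in units of 1/W (W the total fitness), the transition of state {x}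
   in which y copies onto x has weight 1 and leads to extinction, whereas all
   transitions that change the state without extinction have x reproducing and
   total weight at most r.  Since the extinction probability is the limit of the
   nondecreasing n-step extinction probabilities, first-step analysis gives
   extinction probability at least 1/(1+r) from x.  In the (k,l,m)-superstar this
   applies to the centre and to all path vertices, lk+1 of the lm+lk+1 vertices,
   and (lk+1)/((lm+lk+1)(1+r)) >= k/(2r(m+k)) because (lk+1)(m+k) >= k(lm+lk+1)
   and 1+r <= 2r. *)

Lemma sum_mul_indicator {R : pzSemiRingType} {I : finType} (F : I -> R) i :
  \sum_j F j * (j == i)%:R = F i.
Proof.
rewrite (bigD1 i) //= eqxx mulr1 big1 ?addr0 // => j /negbTE->.
by rewrite mulr0.
Qed.

Section MoranProcess.
Variables (R : realType) (V : finType) (edge : rel V) (r : R).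
Hypothesis r_gt0 : 0 < r.
Hypothesis V_gt0 : (0 < #|V|)%N.
Hypothesis outN_gt0 : forall v, (0 < #|outN edge v|)%N.
Implicit Types (S T U : {set V}) (v w x y : V).

Local Notation extinct := (@finset.set0 V).
Local Notation step := (moran_step edge r).

Definition pick_prob S v :=
  fitness r S v / total_fitness r S * (#|outN edge v|%:R)^-1.

Lemma fitness_gt0 S v : 0 < fitness r S v.
Proof. by rewrite /fitness; case: ifP. Qed.

Lemma total_fitness_gt0 S : 0 < total_fitness r S.
Proof.
have [v _] := card_gt0P V_gt0.
rewrite /total_fitness (bigD1 v) //= ltr_pwDl ?fitness_gt0 //.
by apply: sumr_ge0 => w _; apply/ltW/fitness_gt0.
Qed.

Lemma fitness_share_sum1 S : \sum_v fitness r S v / total_fitness r S = 1.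
Proof. by rewrite -mulr_suml divff // gt_eqF // total_fitness_gt0. Qed.

Lemma pick_prob_ge0 S v : 0 <= pick_prob S v.
Proof.
rewrite /pick_prob !mulr_ge0 ?invr_ge0 //.
  exact/ltW/fitness_gt0.
exact/ltW/total_fitness_gt0.
Qed.

Lemma sum_pick_prob S v :
  \sum_(w in outN edge v) pick_prob S v = fitness r S v / total_fitness r S.
Proof.
rewrite sumr_const /pick_prob -mulrnAr -mulr_natr mulVf ?mulr1 //.
by rewrite pnatr_eq0 -lt0n.
Qed.

Lemma moran_stepE S T : step S T =
  \sum_v \sum_(w in outN edge v) pick_prob S v * (reproduce S v w == T)%:R.
Proof. by []. Qed.

Lemma moran_step_ge0 S T : 0 <= step S T.
Proof.
rewrite moran_stepE; do 2![apply: sumr_ge0 => ? _].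
by rewrite mulr_ge0 ?pick_prob_ge0.
Qed.

Lemma moran_step_sum1 S : \sum_T step S T = 1.
Proof.
under eq_bigr do rewrite moran_stepE.
rewrite -[RHS](fitness_share_sum1 S) exchange_big; apply: eq_bigr => v _ /=.
rewrite exchange_big -sum_pick_prob; apply: eq_bigr => w _ /=.
rewrite -[RHS](sum_mul_indicator (fun=> pick_prob S v) (reproduce S v w)).
by apply: eq_bigr => T _; rewrite eq_sym.
Qed.

Lemma moran_step_extinct T : step extinct T = (extinct == T)%:R.
Proof.
have reproduce_extinct v w : reproduce extinct v w = extinct.
  by rewrite /reproduce finset.in_set0 finset.set0D.
rewrite moran_stepE -[RHS]mul1r -(fitness_share_sum1 extinct) mulr_suml.
apply: eq_bigr => v _; rewrite -sum_pick_prob mulr_suml.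
by apply: eq_bigr => w _; rewrite reproduce_extinct.
Qed.

Local Notation extinct_by n S := (moran_nstep edge r n S extinct).

Lemma moran_nstep_ge0 n S T : 0 <= moran_nstep edge r n S T.
Proof.
elim: n S => [|n IH] S /=; first exact: ler0n.
by apply: sumr_ge0 => U _; rewrite mulr_ge0 ?moran_step_ge0.
Qed.

Lemma extinct_by_extinct n : extinct_by n extinct = 1.
Proof.
elim: n => [|n IH] /=; first by rewrite eqxx.
under eq_bigr do rewrite moran_step_extinct mulrC eq_sym.
by rewrite sum_mul_indicator.
Qed.

Lemma extinct_by_le1 n S : extinct_by n S <= 1.
Proof.
elim: n S => [|n IH] S /=; first by case: (_ == _).
rewrite -(moran_step_sum1 S); apply: ler_sum => U _.
by rewrite ler_piMr ?moran_step_ge0.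
Qed.

Lemma extinct_by_nondecreasing n S : extinct_by n S <= extinct_by n.+1 S.
Proof.
elim: n S => [|n IH] S /=; last first.
  by apply: ler_sum => U _; rewrite ler_wpM2l ?moran_step_ge0.
rewrite sum_mul_indicator; have [->|_] := eqVneq S extinct.
  by rewrite moran_step_extinct eqxx.
exact: moran_step_ge0.
Qed.

Lemma extinct_by_succ_ge n S : S != extinct ->
  step S S * extinct_by n S + step S extinct <= extinct_by n.+1 S.
Proof.
move=> S_neq0 /=; rewrite (bigD1 S) //= (bigD1 extinct) 1?eq_sym //=.
rewrite extinct_by_extinct mulr1 addrA lerDl.
by apply: sumr_ge0 => U _; rewrite mulr_ge0 ?moran_step_ge0 ?moran_nstep_ge0.
Qed.

Section SingleMutant.
Variable x : V.
Local Notation S := [set x]%SET.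
Local Notation ext := (extinction_prob edge r x).

Lemma set1_neq0 : S != extinct.
Proof. by apply/finset.set0Pn; exists x; rewrite finset.set11. Qed.

Lemma extinct_by_nondecreasing_seq : nondecreasing_seq (fun n => extinct_by n S).
Proof. by apply/nondecreasing_seqP => n; exact: extinct_by_nondecreasing. Qed.

Lemma extinct_by_cvgn : cvgn (fun n => extinct_by n S).
Proof.
apply: nondecreasing_is_cvgn; first exact: extinct_by_nondecreasing_seq.
by exists 1 => _ [n _ <-]; exact: extinct_by_le1.
Qed.

Lemma extinct_by_le_extinction_prob n : extinct_by n S <= ext.
Proof.
exact: nondecreasing_cvgn_le extinct_by_nondecreasing_seq extinct_by_cvgn n.
Qed.

Lemma extinction_prob_ge0 : 0 <= ext.
Proof. exact: le_trans (moran_nstep_ge0 _ _ _) (extinct_by_le_extinction_prob 0). Qed.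

Lemma extinction_prob_le1 : ext <= 1.
Proof.
by apply: limr_le; [exact: extinct_by_cvgn | apply: nearW => n; exact: extinct_by_le1].
Qed.

Lemma extinction_prob_first_step : step S S * ext + step S extinct <= ext.
Proof.
have lim_step : ((fun n => step S S * extinct_by n S + step S extinct) @ \oo -->
    step S S * ext + step S extinct)%classic.
  by apply: cvgD; [apply: cvgMl_tmp; exact: extinct_by_cvgn | exact: cvg_cst].
apply: (cvgr_to_le lim_step); apply: nearW => n /=.
apply: le_trans (extinct_by_succ_ge n _ set1_neq0) _.
exact: extinct_by_le_extinction_prob.
Qed.

Lemma reproduce_set1_nonmutant v w : v != x ->
  reproduce S v w = if w == x then extinct else S.
Proof.
move=> v_neq_x; rewrite /reproduce finset.in_set1 (negbTE v_neq_x).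
have [->|w_neq_x] := eqVneq w x; first exact: finset.setDv.
apply/finset.setP => z; rewrite !inE; have [->|] := eqVneq z x; last by rewrite andbF.
by rewrite eq_sym w_neq_x.
Qed.

Lemma moran_step_set1_stay_or_die :
  1 - r / total_fitness r S <= step S S + step S extinct.
Proof.
have share_rest : \sum_(v | v != x) fitness r S v / total_fitness r S =
    1 - r / total_fitness r S.
  rewrite -(fitness_share_sum1 S) [in RHS](bigD1 x) //= {2}/fitness finset.set11.
  by rewrite addrAC subrr add0r.
rewrite !moran_stepE -big_split (bigD1 x) //= -share_rest.
rewrite [X in _ <= _ + X](eq_bigr (fun v => fitness r S v / total_fitness r S)).
  by rewrite lerDr addr_ge0 // sumr_ge0 // => w _; rewrite mulr_ge0 ?pick_prob_ge0.
move=> v v_neq_x; rewrite -big_split -sum_pick_prob /=; apply: eq_bigr => w _.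
rewrite -mulrDr reproduce_set1_nonmutant //.
have S_neq0 := set1_neq0; have [_|_] := eqVneq w x; rewrite eqxx.
  by rewrite eq_sym (negbTE S_neq0) add0r mulr1.
by rewrite (negbTE S_neq0) addr0 mulr1.
Qed.

Lemma moran_step_set1_die y : y != x -> outN edge y = S ->
  (total_fitness r S)^-1 <= step S extinct.
Proof.
move=> y_neq_x outN_y; rewrite moran_stepE (bigD1 y) //= outN_y big_set1.
rewrite reproduce_set1_nonmutant // eqxx eqxx mulr1 /pick_prob outN_y cards1 invr1 mulr1.
rewrite /fitness finset.in_set1 (negbTE y_neq_x) mul1r lerDl.
by do 2![apply: sumr_ge0 => ? _]; rewrite mulr_ge0 ?pick_prob_ge0.
Qed.

Lemma extinction_prob_sole_target y : y != x -> outN edge y = S ->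
  (1 + r)^-1 <= ext.
Proof.
move=> y_neq_x outN_y.
set t := (total_fitness r S)^-1; set q := step S S; set p := step S extinct.
have first_step : q * ext + p <= ext := extinction_prob_first_step.
have stay_or_die : 1 - r * t <= q + p := moran_step_set1_stay_or_die.
have die : t <= p := moran_step_set1_die _ y_neq_x outN_y.
have ext_ge0 := extinction_prob_ge0; have ext_le1 := extinction_prob_le1.
have t_gt0 : 0 < t by rewrite invr_gt0 total_fitness_gt0.
have die_le_survive : p * (1 - ext) <= t * (r * ext).
  have : 0 <= ext * (q + p - (1 - r * t)) by rewrite mulr_ge0 // subr_ge0.
  nra.
have : t * (1 - ext) <= t * (r * ext).
  by apply: le_trans die_le_survive; rewrite ler_wpM2r // subr_ge0.
rewrite ler_pM2l // => survive_ratio.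
by rewrite -div1r ler_pdivrMr; nra.
Qed.

End SingleMutant.
End MoranProcess.

Lemma superstar_ratio_le (R : realFieldType) (r : R) (k l m : nat) :
  1 <= r -> (0 < k)%N ->
  k%:R / (2 * r * (m + k)%:R) <=
    ((l * m + l * k + 1)%:R)^-1 * (((l * k + 1)%:R) / (1 + r)).
Proof.
move=> r_ge1 k_gt0.
have mk_gt0 : 0 < (m + k)%:R :> R by rewrite ltr0n addn_gt0 k_gt0 orbT.
have N_gt0 : 0 < (l * m + l * k + 1)%:R :> R by rewrite ltr0n addn1.
have share : k%:R / (m + k)%:R <= (l * k + 1)%:R / (l * m + l * k + 1)%:R :> R.
  rewrite ler_pdivrMr // mulrAC ler_pdivlMr // -!natrM ler_nat; nia.
have fitness_factor : (2 * r)^-1 <= (1 + r)^-1.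
  by rewrite lef_pV2 ?posrE; lra.
have -> : k%:R / (2 * r * (m + k)%:R) = k%:R / (m + k)%:R * (2 * r)^-1.
  by rewrite invfM mulrA [_ / _ * _]mulrAC [_ * _^-1 * _^-1]mulrAC.
rewrite mulrA [_^-1 * _]mulrC ler_pM ?divr_ge0 ?invr_ge0 ?ler0n //; lra.
Qed.

Section Superstar.
Variables (k l m : nat).
Hypotheses (k_gt0 : (0 < k)%N) (l_gt0 : (0 < l)%N) (m_gt0 : (0 < m)%N).
Local Notation V := (superstar_vertex k l m).
Local Notation E := (@superstar_edge k l m).

Lemma card_superstar : #|V| = (l * m + l * k + 1)%N.
Proof. by rewrite !card_sum !card_prod !card_ord card_unit. Qed.

Lemma superstar_outN_gt0 (v : V) : (0 < #|outN E v|)%N.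
Proof.
apply/card_gt0P; case: v => [[[i j]|[i j]]|[]].
- by exists (inl (inr (i, Ordinal k_gt0))); rewrite inE /= eqxx.
- have [j1_lt_k|j1_ge_k] := ltnP j.+1 k.
    by exists (inl (inr (i, Ordinal j1_lt_k))); rewrite inE /= !eqxx.
  by exists (inr tt); rewrite inE /=; apply/eqP; have := ltn_ord j; lia.
- by exists (inl (inl (Ordinal l_gt0, Ordinal m_gt0))); rewrite inE.
Qed.

Lemma superstar_path_sole_target i (j : 'I_k) :
  exists2 y : V, y != inl (inr (i, j)) & outN E y = [set inl (inr (i, j))].
Proof.
case: j => [[|j] j_lt_k].
- exists (inl (inl (i, Ordinal m_gt0))) => //.
  apply/finset.setP => -[[[i' j']|[i' j']]|[]]; rewrite !inE //=.
  apply/andP/eqP => [[/eqP <- /eqP j'0]|[-> ->]]; last by rewrite eqxx.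
  by congr (inl (inr (_, _))); exact: val_inj.
- have j_lt_k' : (j < k)%N by lia.
  exists (inl (inr (i, Ordinal j_lt_k'))); first by apply/eqP => -[] /eqP; lia.
  apply/finset.setP => -[[[i' j']|[i' j']]|[]]; rewrite !inE //=; last first.
    by apply/negbTE/eqP; lia.
  apply/andP/eqP => [[/eqP <- /eqP j'j]|[-> ->]]; last by rewrite !eqxx.
  by congr (inl (inr (_, _))); exact: val_inj.
Qed.

Lemma superstar_centre_sole_target :
  exists2 y : V, y != inr tt & outN E y = [set inr tt].
Proof.
have k1_lt_k : (k.-1 < k)%N by lia.
exists (inl (inr (Ordinal l_gt0, Ordinal k1_lt_k))) => //.
apply/finset.setP => -[[[i' j']|[i' j']]|[]]; rewrite !inE //= ?eqxx //.
by apply/negbTE/nandP; right; have := ltn_ord j'; lia.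
Qed.

Variables (R : realType) (r : R).
Hypothesis r_gt0 : 0 < r.

Lemma superstar_extinction_sum :
  (l * k + 1)%:R / (1 + r) <= \sum_(x : V) extinction_prob E r x.
Proof.
have V_gt0 : (0 < #|V|)%N by rewrite card_superstar addn1.
have ext_ge0 := @extinction_prob_ge0 _ _ E _ r_gt0 V_gt0 superstar_outN_gt0.
have sole_target x : (exists2 y, y != x & outN E y = [set x]) ->
    (1 + r)^-1 <= extinction_prob E r x.
  case=> y; exact: (@extinction_prob_sole_target _ _ E _ r_gt0 V_gt0 superstar_outN_gt0).
rewrite !big_sumType /= natrD mulr1n mulrDl mul1r.
apply: lerD; last first.
  rewrite (big_pred1 tt) => [|[] //]; exact/sole_target/superstar_centre_sole_target.
rewrite -[X in X <= _]add0r; apply: lerD; first exact: sumr_ge0.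
have -> : (l * k)%:R / (1 + r) = \sum_(x : 'I_l * 'I_k) (1 + r)^-1.
  by rewrite sumr_const card_prod !card_ord mulr_natl.
by apply: ler_sum => -[i j] _; exact/sole_target/superstar_path_sole_target.
Qed.

End Superstar.

Theorem lemma4p2 (R : realType) (r : R) (k l m : nat) :
  1 < r -> (0 < k)%N -> (0 < l)%N -> (0 < m)%N ->
  k%:R / (2 * r * (m + k)%:R) <=
    uniform_extinction_prob (@superstar_edge k l m) r.
Proof.
move=> r_gt1 k_gt0 l_gt0 m_gt0.
rewrite /uniform_extinction_prob card_superstar.
apply: le_trans (superstar_ratio_le _ _ _ l m (ltW r_gt1) k_gt0) _.
rewrite ler_wpM2l ?invr_ge0 //; apply: superstar_extinction_sum => //; lra.
Qed.
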